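(* Let $p>3$ be a prime, let $a$ be a positive integer with $\gcd(a,p)=1$, and let $r\ge0$, $m\ge1$ be integers. Let $b_{2,r,a,m}(n)$ be the number of partitions of $n$ in which every multiplicity has the form $j(pr+a)+pk$ with $j\in\{0,1\}$ and $0\le k\le m-1$. Let $t$ be an integer such that $24ta^{-1}+1$ is a quadratic nonresidue modulo $p$, where $a^{-1}$ is the inverse of $a$ modulo $p$. Then $b_{2,r,a,m}(pn+t)\equiv 0\pmod 2$ for all $n\ge0$.
   Context: Multiplicity of a part means the number of times it appears in the partition. Equivalently, $\sum_{n\ge0}b_{2,r,a,m}(n)q^n=\prod_{n\ge1}\frac{(1-q^{2(pr+a)n})(1-q^{pmn})}{(1-q^{(pr+a)n})(1-q^{pn})}$. *)

From mathcomp Require Import all_boot all_order all_algebra.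
Set Implicit Arguments. Unset Strict Implicit. Unset Printing Implicit Defensive.
Import Order.TTheory GRing.Theory Num.Theory.

Definition allowed_mult (p r a m mu : nat) : bool :=
  [exists j : 'I_2, exists k : 'I_m, mu == j * (p * r + a) + p * k].

(* A partition of n is encoded by its multiplicity function: part i+1 (i : 'I_n)
   occurs f i times (f i <= n), with sum_i (i+1) * f i = n. *)
Definition b2 (p r a m n : nat) : nat :=
  #|[set f : {ffun 'I_n -> 'I_n.+1} |
      ((\sum_(i < n) (i.+1) * f i)%N == n) &&
      [forall i : 'I_n, allowed_mult p r a m (f i)]]|.

Definition qnr (p : nat) (x : int) : Prop :=
  ~ exists y : int, (y ^+ 2 = x %[mod p%:Z])%Z.

(* Write an allowed multiplicity as mu = j (p r + a) + p k with j in {0, 1};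
   as p does not divide a, j = 1 exactly when p does not divide mu. The parts
   with j = 1 form a partition lambda into distinct parts, and
   n = (p r + a) |lambda| + p K = a |lambda| (mod p). Franklin's involution
   changes the part set of lambda by a set D on which the parts entering and
   leaving lambda have equal sums, so toggling j on the parts in D
   (mu <-> mu -+ (p r + a)) preserves n and is a fixed-point-free involution on
   the partitions counted by b_{2,r,a,m}(n), as long as Franklin's involution is
   defined at lambda. It is undefined only at pentagonal lambda, where
   24 |lambda| + 1 is a square; then n = p n' + t = a |lambda| (mod p) would make
   24 t a^-1 + 1 a square modulo p. *)

From mathcomp Require Import all_boot all_order all_algebra.
From mathcomp Require Import zify ring.
Set Implicit Arguments. Unset Strict Implicit. Unset Printing Implicit Defensive.

Lemma card_even_involution (T : finType) (A : {set T}) (g : T -> T) :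
  {in A, forall x, g x \in A} -> {in A, forall x, g (g x) = x} ->
  {in A, forall x, g x != x} -> ~~ odd #|A|.
Proof.
elim: {A}#|A| {-2}A (leqnn #|A|) => [|n IHn] A leAn gA ggA gxA.
  by move: leAn; rewrite leqn0 => /eqP ->.
have [->|[x Ax]] := set_0Vmem A; first by rewrite cards0.
have gxAx : g x \in A :\ x by rewrite !inE gxA ?gA.
have cardA : #|A| = #|A :\ x :\ g x|.+2.
  by rewrite (cardsD1 x) Ax (cardsD1 (g x) (A :\ x)) gxAx.
rewrite cardA /= negbK; apply: IHn => [|y|y|y]; rewrite ?inE.
- by move: leAn; rewrite cardA ltnS => /ltnW.
- case/and3P=> ygx yx Ay; rewrite (gA y Ay) andbT.
  apply/andP; split.
    by apply: contra_neq yx => gyE; rewrite -(ggA y Ay) gyE ggA.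
  by apply: contra_neq ygx => gyE; rewrite -(ggA y Ay) gyE.
- by case/and3P=> _ _ /ggA.
- by case/and3P=> _ _ /gxA.
Qed.

Definition findn (P : pred nat) B := find P (iota 0 B).

Lemma findn_le (P : pred nat) B : findn P B <= B.
Proof. by rewrite -[X in _ <= X](size_iota 0 B) find_size. Qed.

Lemma findn_min (P : pred nat) B y : y < findn P B -> ~~ P y.
Proof.
move=> lty; have ltyB := leq_trans lty (findn_le P B).
by have := before_find 0 lty; rewrite nth_iota // add0n => ->.
Qed.

Lemma findn_sat (P : pred nat) B : findn P B < B -> P (findn P B).
Proof.
move=> ltB; have hasP : has P (iota 0 B) by rewrite has_find size_iota.
by have := nth_find 0 hasP; rewrite nth_iota.
Qed.

Lemma findn_le_sat (P : pred nat) B x : P x -> findn P B <= x.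
Proof. by move=> Px; rewrite leqNgt; apply: contraL Px; apply: findn_min. Qed.

Lemma eq_findn (P Q : pred nat) B : P =1 Q -> findn P B = findn Q B.
Proof. by move=> ePQ; apply: eq_find. Qed.

Definition bounded_parts N (J : pred nat) := forall x, J x -> 0 < x <= N.

Section PartStatistics.

Variables (N : nat) (J : pred nat).

Definition least_part := findn J N.+1.
Definition largest_part := N - findn (fun k => J (N - k)) N.+1.
Definition top_run := findn (fun k => ~~ J (largest_part - k)) N.+1.

Hypothesis J_bounded : bounded_parts N J.
Variables (x : nat) (Jx : J x).

Lemma least_partP :
  [/\ J least_part, least_part <= N & forall y, J y -> least_part <= y].
Proof.
have [_ xN] := andP (J_bounded Jx).
have leN : least_part <= N := leq_trans (findn_le_sat N.+1 Jx) xN.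
by split=> [|//|y]; [apply: findn_sat | apply: findn_le_sat].
Qed.

Lemma largest_partP : J largest_part /\ forall y, J y -> y <= largest_part.
Proof.
have [_ xN] := andP (J_bounded Jx).
have JNx : J (N - (N - x)) by rewrite subKn.
have leN := leq_trans (@findn_le_sat (fun k => J (N - k)) N.+1 _ JNx) (leq_subr x N).
split=> [|y Jy]; first exact: (@findn_sat (fun k => J (N - k))).
have [_ yN] := andP (J_bounded Jy).
have : findn (fun k => J (N - k)) N.+1 <= N - y by apply: findn_le_sat; rewrite subKn.
rewrite /largest_part; lia.
Qed.

Lemma top_runP :
  [/\ forall k, k < top_run -> J (largest_part - k),
      ~~ J (largest_part - top_run) & top_run <= largest_part].
Proof.
have [JM _] := largest_partP; have [_ MN] := andP (J_bounded JM).
have notJ0 : ~~ J (largest_part - largest_part).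
  by rewrite subnn; apply/negP=> /J_bounded.
have le_run := @findn_le_sat (fun k => ~~ J (largest_part - k)) N.+1 _ notJ0.
split=> // [k /findn_min|]; first by rewrite negbK.
by apply: (@findn_sat (fun k => ~~ J (largest_part - k))); rewrite ltnS (leq_trans le_run).
Qed.

Lemma least_part_eq : (forall y, J y -> x <= y) -> least_part = x.
Proof.
by move=> xmin; have [Js _ smin] := least_partP; apply/eqP; rewrite eqn_leq smin ?xmin.
Qed.

Lemma largest_part_eq : (forall y, J y -> y <= x) -> largest_part = x.
Proof.
by move=> xmax; have [JM Mmax] := largest_partP; apply/eqP; rewrite eqn_leq Mmax ?xmax.
Qed.

Lemma top_run_ge r : (forall k, k < r -> J (largest_part - k)) -> r <= top_run.
Proof.
move=> Jrun; have [_ notJ _] := top_runP.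
by rewrite leqNgt; apply: contraNN notJ => /Jrun.
Qed.

Lemma top_run_eq r : (forall k, k < r -> J (largest_part - k)) ->
  ~~ J (largest_part - r) -> top_run = r.
Proof.
by move=> Jrun notJ; apply/eqP; rewrite eqn_leq findn_le_sat // top_run_ge.
Qed.

End PartStatistics.

Lemma sum_iota_double lo n : 2 * (\sum_(x <- iota lo n) x) + n = n * (2 * lo + n).
Proof.
elim: n => [|n IHn]; first by rewrite big_nil.
by rewrite -[n.+1]addn1 iotaD big_cat big_seq1 /=; nia.
Qed.

Lemma sum_parts_mem N (D : seq nat) (F : nat -> nat) : uniq D ->
  (forall x, x \in D -> 0 < x <= N) ->
  \sum_(i < N | i.+1 \in D) F i.+1 = \sum_(x <- D) F x.
Proof.
move=> D_uniq D_bounded.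
have -> : \sum_(i < N | i.+1 \in D) F i.+1 = \sum_(x <- iota 1 N | x \in D) F x.
  rewrite -(big_mkord (fun i => i.+1 \in D) (fun i => F i.+1)).
  by rewrite /index_iota subn0 (iotaDl 1 0 N) big_map.
rewrite -big_filter; apply/perm_big/uniq_perm; rewrite ?filter_uniq ?iota_uniq //.
by move=> x; rewrite mem_filter mem_iota; case: (boolP (x \in D)) => // /D_bounded; lia.
Qed.

Definition toggle_set (J : pred nat) (D : seq nat) : pred nat :=
  fun x => J x (+) (x \in D).

(* Keeps the parts created by Franklin's move within 1..N. *)
Definition pair_sum_le N (J : pred nat) :=
  forall x y, J x -> J y -> x < y -> x + y <= N.

(* Franklin's involution on the partition into the distinct parts J, with
   smallest part s, largest part M and top run r (the number of consecutive
   parts M, M - 1, ... in J): if s <= r, the smallest part is spread over the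
   s largest parts; otherwise the r largest parts each give 1 to a new part r.
   The image is J toggled on the returned list; [::] is returned where the
   involution is undefined, i.e. J empty or pentagonal. *)
Definition franklin_delta N (J : pred nat) : seq nat :=
  let s := least_part N J in let M := largest_part N J in let r := top_run N J in
  if N < s then [::]
  else if s <= r then if s == M - s + 1 then [::] else [:: s; M - s + 1; M + 1]
  else if M == r + r then [::] else [:: M; M - r; r].

Definition franklin_move N (J : pred nat) (D : seq nat) :=
  [/\ uniq D, forall x, x \in D -> 0 < x <= N,
      \sum_(x <- D | J x) x = \sum_(x <- D | ~~ J x) x
    & franklin_delta N (toggle_set J D) =i D].

Lemma eq_franklin_delta N (J1 J2 : pred nat) :
  J1 =1 J2 -> franklin_delta N J1 = franklin_delta N J2.
Proof.
move=> eJ; have eM : largest_part N J1 = largest_part N J2.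
  by congr (_ - _); apply: eq_findn => k; apply: eJ.
have er : top_run N J1 = top_run N J2 by apply: eq_findn => k; rewrite /= eM eJ.
by rewrite /franklin_delta /least_part (eq_findn _ eJ) eM er.
Qed.

Lemma toggle_set_bounded N J D : bounded_parts N J ->
  (forall x, x \in D -> 0 < x <= N) -> bounded_parts N (toggle_set J D).
Proof. by move=> Jb Db x; rewrite /toggle_set; case: (boolP (J x)) => [/Jb|_ /Db]. Qed.

Section FranklinMove.

Variables (N : nat) (J : pred nat).
Hypotheses (J_bounded : bounded_parts N J) (J_pair_sum : pair_sum_le N J).
Hypothesis J_nonempty : least_part N J <= N.

Local Notation s := (least_part N J).
Local Notation M := (largest_part N J).
Local Notation r := (top_run N J).

Let J_least : J s. Proof. exact: findn_sat. Qed.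

Let least_min y : J y -> s <= y.
Proof. by case: (least_partP J_bounded J_least) => _ _; apply. Qed.

Let J_largest : J M. Proof. by case: (largest_partP J_bounded J_least). Qed.

Let largest_max y : J y -> y <= M.
Proof. by case: (largest_partP J_bounded J_least) => _; apply. Qed.

Let top_run_in k : k < r -> J (M - k).
Proof. by case: (top_runP J_bounded J_least) => + _ _; apply. Qed.

Let top_run_out : ~~ J (M - r). Proof. by case: (top_runP J_bounded J_least). Qed.

Let franklin_bounds : [/\ 0 < s, 0 < r, r <= M, M <= N & s <= M - r + 1].
Proof.
have [s_gt0 _] := andP (J_bounded J_least); have [_ M_le_N] := andP (J_bounded J_largest).
have [_ _ r_le_M] := top_runP J_bounded J_least.
have r_gt0 : 0 < r by rewrite lt0n; apply: contraNneq top_run_out => ->; rewrite subn0.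
split=> //; have := least_min (@top_run_in r.-1 _); lia.
Qed.

Lemma franklin_deltaE : franklin_delta N J =
  if s <= r then if s == M - s + 1 then [::] else [:: s; M - s + 1; M + 1]
  else if M == r + r then [::] else [:: M; M - r; r].
Proof. by rewrite /franklin_delta /= ltnNge J_nonempty. Qed.

Lemma franklin_move_up : s <= r -> s != M - s + 1 ->
  franklin_move N J [:: s; M - s + 1; M + 1].
Proof.
move=> s_le_r s_neq; have [s_gt0 r_gt0 r_le_M M_le_N s_le_bot] := franklin_bounds.
have JMs : J (M - s + 1).
  by have := @top_run_in (s - 1) ltac:(lia); rewrite (_ : M - (s - 1) = M - s + 1) //; lia.
have M1_le_N : M + 1 <= N by have := J_pair_sum J_least J_largest; lia.
have notJM1 : ~~ J (M + 1) by apply/negP => /largest_max; lia.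
set D := [:: s; M - s + 1; M + 1].
have D_bounded x : x \in D -> 0 < x <= N by rewrite !inE => /or3P[]/eqP->; lia.
split=> //; first by rewrite /= !inE; lia.
  by rewrite !big_cons !big_nil J_least JMs (negbTE notJM1) /=; lia.
set J' := toggle_set J D.
have J'_bounded : bounded_parts N J' := toggle_set_bounded J_bounded D_bounded.
have J'M1 : J' (M + 1) by rewrite /J' /toggle_set (negbTE notJM1) !inE eqxx !orbT.
have M'_eq : largest_part N J' = M + 1.
  apply: (largest_part_eq J'_bounded J'M1) => y; rewrite /J' /toggle_set.
  case Jy: (J y) => /=; first by have := largest_max Jy; lia.
  by rewrite !inE => /or3P[]/eqP->; lia.
have r'_eq : top_run N J' = s.
  apply: (top_run_eq J'_bounded J'M1); rewrite M'_eq /J' /toggle_set.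
    move=> [|k] lt_ks; first by rewrite subn0 (negbTE notJM1) !inE eqxx !orbT.
    by rewrite (_ : M + 1 - k.+1 = M - k) ?top_run_in ?inE /=; lia.
  by rewrite (_ : M + 1 - s = M - s + 1) ?JMs ?inE ?eqxx ?orbT //; lia.
have J'_gt_s y : J' y -> s < y.
  rewrite /J' /toggle_set; case Jy: (J y) => /=.
    by have := least_min Jy; rewrite !inE; lia.
  by rewrite !inE => /or3P[]/eqP ey; [rewrite ey J_least in Jy | rewrite ey JMs in Jy | lia].
have [J's' s'_le_N _] := least_partP J'_bounded J'M1.
rewrite /franklin_delta /= M'_eq r'_eq ltnNge s'_le_N leqNgt J'_gt_s //=.
have -> : (M + 1 == s + s) = false by apply/eqP; lia.
by rewrite (_ : M + 1 - s = M - s + 1); [exact: (mem_rev D) | lia].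
Qed.

Lemma franklin_move_down : r < s -> M != r + r -> franklin_move N J [:: M; M - r; r].
Proof.
move=> r_lt_s M_neq; have [s_gt0 r_gt0 r_le_M M_le_N s_le_bot] := franklin_bounds.
have notJr : ~~ J r by apply/negP => /least_min; lia.
set D := [:: M; M - r; r].
have D_bounded x : x \in D -> 0 < x <= N by rewrite !inE => /or3P[]/eqP->; lia.
split=> //; first by rewrite /= !inE; lia.
  by rewrite !big_cons !big_nil J_largest (negbTE top_run_out) (negbTE notJr) /=; lia.
set J' := toggle_set J D.
have J'_bounded : bounded_parts N J' := toggle_set_bounded J_bounded D_bounded.
have J'r : J' r by rewrite /J' /toggle_set (negbTE notJr) !inE eqxx !orbT.
have s'_eq : least_part N J' = r.
  apply: (least_part_eq J'_bounded J'r) => y; rewrite /J' /toggle_set.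
  case Jy: (J y) => /=; first by have := least_min Jy; lia.
  by rewrite !inE => /or3P[]/eqP->; lia.
have J'M1 : J' (M - 1).
  rewrite /J' /toggle_set; have [r1|r_neq1] := eqVneq r 1.
    by move: top_run_out; rewrite /D r1 => /negbTE ->; rewrite !inE eqxx !orbT.
  by rewrite top_run_in ?inE /=; lia.
have M'_eq : largest_part N J' = M - 1.
  apply: (largest_part_eq J'_bounded J'M1) => y; rewrite /J' /toggle_set.
  case Jy: (J y) => /=; first by have := largest_max Jy; rewrite !inE; lia.
  by rewrite !inE => /or3P[]/eqP ey; [rewrite ey J_largest in Jy | lia | lia].
have r_le_r' : r <= top_run N J'.
  apply: (top_run_ge J'_bounded J'r) => k lt_kr; rewrite M'_eq /J' /toggle_set.
  have [->|k_neq] := eqVneq k r.-1.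
    by rewrite (_ : M - 1 - r.-1 = M - r) ?(negbTE top_run_out) ?inE ?eqxx ?orbT //; lia.
  by rewrite (_ : M - 1 - k = M - k.+1) ?top_run_in ?inE /=; lia.
rewrite /franklin_delta /= s'_eq M'_eq ltnNge (leq_trans (ltnW r_lt_s)) // r_le_r' /=.
have -> : (r == M - 1 - r + 1) = false by apply/eqP; lia.
have -> : M - 1 - r + 1 = M - r by lia.
have -> : M - 1 + 1 = M by lia.
exact: (mem_rev D).
Qed.

Lemma top_run_cover : s = M - r + 1 -> forall x, J x = (x \in iota s r).
Proof.
move=> s_bot x; have [s_gt0 r_gt0 r_le_M M_le_N _] := franklin_bounds.
rewrite mem_iota; case Jx: (J x); first by have := least_min Jx; have := largest_max Jx; lia.
apply/esym/negP => x_in; have := @top_run_in (M - x) ltac:(lia).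
by rewrite (_ : M - (M - x) = x) ?Jx //; lia.
Qed.

Lemma franklin_delta_nil_square : franklin_delta N J = [::] ->
  exists y, 24 * (\sum_(i < N | J i.+1) i.+1) + 1 = y ^ 2.
Proof.
have [s_gt0 r_gt0 r_le_M M_le_N s_le_bot] := franklin_bounds.
have sum_J : s = M - r + 1 -> 2 * (\sum_(i < N | J i.+1) i.+1) + r = r * (2 * s + r).
  move=> s_bot; rewrite -sum_iota_double (eq_bigl (fun i : 'I_N => i.+1 \in iota s r)).
    by rewrite (sum_parts_mem id) ?iota_uniq // => x; rewrite mem_iota; lia.
  by move=> i; rewrite top_run_cover.
(* J is [s, 2s - 1] or [r + 1, 2r], and 24 k (3k -+ 1) / 2 + 1 = (6k -+ 1)^2. *)
rewrite franklin_deltaE; case: ifP => [s_le_r|r_lt_s]; case: eqP => // e _.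
  have r_eq : r = s by lia.
  by exists (6 * s - 1); have := sum_J ltac:(lia); rewrite r_eq; nia.
have s_eq : s = r.+1 by lia.
by exists (6 * r + 1); have := sum_J ltac:(lia); rewrite s_eq; nia.
Qed.

End FranklinMove.

Lemma franklin_delta_move N J : bounded_parts N J -> pair_sum_le N J ->
  franklin_delta N J != [::] -> franklin_move N J (franklin_delta N J).
Proof.
move=> J_bounded J_pair_sum; have [sN|Ns] := leqP (least_part N J) N; last first.
  by rewrite /franklin_delta /= Ns.
rewrite franklin_deltaE //; case: ifP => [s_le_r|r_lt_s]; case: ifP => [//|neq _].
  by apply: franklin_move_up => //; rewrite neq.
by apply: franklin_move_down; rewrite // ?neq // ltnNge r_lt_s.
Qed.

Lemma franklin_delta_nil N J : bounded_parts N J -> franklin_delta N J = [::] ->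
  exists y, 24 * (\sum_(i < N | J i.+1) i.+1) + 1 = y ^ 2.
Proof.
move=> J_bounded; have [sN|Ns] := leqP (least_part N J) N.
  exact: franklin_delta_nil_square.
move=> _; exists 1; rewrite big_pred0 // => i.
apply/negP => /(least_partP J_bounded)[_ sN _].
by rewrite ltnNge sN in Ns.
Qed.

(* For an allowed multiplicity mu = j (p r + a) + p k with p not dividing a,
   j = 1 exactly when p does not divide mu. *)
Definition mult_j p mu : bool := ~~ (p %| mu).
Definition toggle_mult p b mu := if mult_j p mu then mu - b else mu + b.

Lemma mult_j_gt0 p mu : mult_j p mu -> 0 < mu.
Proof. by move=> ndvd; rewrite lt0n; apply: contraNneq ndvd => ->; apply: dvdn0. Qed.

Section Multiplicities.

Variables (p r a m : nat).
Hypothesis p_ndvd_a : ~~ (p %| a).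
Local Notation b := (p * r + a).

Lemma allowed_multP mu : reflect (exists2 k, k < m & mu = p * k \/ mu = b + p * k)
  (allowed_mult p r a m mu).
Proof.
apply: (iffP existsP) => [[j /existsP[k /eqP->]] | [k k_lt_m [->|->]]].
- by exists k => //; case: j => [[|[|//]] _] /=; [left | right]; rewrite ?mul0n ?mul1n.
- by exists ord0; apply/existsP; exists (Ordinal k_lt_m); rewrite mul0n.
- by exists ord_max; apply/existsP; exists (Ordinal k_lt_m); rewrite mul1n.
Qed.

Lemma mult_j_pmul k : mult_j p (p * k) = false.
Proof. by rewrite /mult_j dvdn_mulr ?dvdnn. Qed.

Lemma mult_j_shift k : mult_j p (b + p * k) = true.
Proof. by rewrite /mult_j -addnA dvdn_addr ?dvdn_mulr // dvdn_addl ?dvdn_mulr. Qed.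

Lemma allowed_mult_toggle mu : allowed_mult p r a m mu ->
  [/\ allowed_mult p r a m (toggle_mult p b mu),
      mult_j p (toggle_mult p b mu) = ~~ mult_j p mu,
      toggle_mult p b (toggle_mult p b mu) = mu & toggle_mult p b mu != mu].
Proof.
have a_gt0 : 0 < a by rewrite lt0n; apply: contraNneq p_ndvd_a => ->; apply: dvdn0.
case/allowed_multP => k k_lt_m [->|->]; rewrite /toggle_mult ?mult_j_pmul ?mult_j_shift /=.
  rewrite [p * k + b]addnC mult_j_shift addKn; split=> //; last lia.
  by apply/allowed_multP; exists k => //; right.
rewrite addKn mult_j_pmul [p * k + b]addnC; split=> //; last lia.
by apply/allowed_multP; exists k => //; left.
Qed.

Lemma toggle_mult_balance mu : allowed_mult p r a m mu ->
  toggle_mult p b mu + mult_j p mu * b = mu + ~~ mult_j p mu * b.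
Proof.
by case/allowed_multP => k _ [->|->]; rewrite /toggle_mult ?mult_j_pmul ?mult_j_shift /=; lia.
Qed.

Lemma allowed_mult_mod mu : allowed_mult p r a m mu -> mu = mult_j p mu * a %[mod p].
Proof.
case/allowed_multP => k _ [->|->]; first by rewrite mult_j_pmul mul0n mod0n modnMr.
by rewrite mult_j_shift mul1n addnAC -mulnDr mulnC modnMDl.
Qed.

End Multiplicities.

Definition b2_partition p r a m N (f : {ffun 'I_N -> 'I_N.+1}) : bool :=
  ((\sum_(i < N) i.+1 * f i)%N == N) && [forall i, allowed_mult p r a m (f i)].

Definition jparts p N (f : {ffun 'I_N -> 'I_N.+1}) : pred nat :=
  fun x => [exists i : 'I_N, (i.+1 == x) && mult_j p (f i)].

Definition franklin_mult p b N (f : {ffun 'I_N -> 'I_N.+1}) (i : 'I_N) : nat :=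
  if i.+1 \in franklin_delta N (jparts p f) then toggle_mult p b (f i) else f i.

Definition franklin_partition p b N (f : {ffun 'I_N -> 'I_N.+1}) :
  {ffun 'I_N -> 'I_N.+1} := [ffun i => inord (franklin_mult p b f i)].

Lemma jparts_succ p N (f : {ffun 'I_N -> 'I_N.+1}) (i : 'I_N) :
  jparts p f i.+1 = mult_j p (f i).
Proof.
apply/existsP/idP => [[j /andP[/eqP/succn_inj/val_inj-> //]] | fi].
by exists i; rewrite eqxx.
Qed.

Lemma jparts_bounded p N (f : {ffun 'I_N -> 'I_N.+1}) : bounded_parts N (jparts p f).
Proof. by move=> x /existsP[i /andP[/eqP<- _]]; rewrite ltn_ord. Qed.

Section FranklinPartition.

Variables (p r a m N : nat).
Hypothesis p_ndvd_a : ~~ (p %| a).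
Local Notation b := (p * r + a).

Variable f : {ffun 'I_N -> 'I_N.+1}.
Hypothesis f_b2 : b2_partition p r a m f.

Let f_sum : \sum_(i < N) i.+1 * f i = N. Proof. exact/eqP/(andP f_b2).1. Qed.
Let f_allowed i : allowed_mult p r a m (f i).
Proof. by have /forallP := (andP f_b2).2; apply. Qed.

Lemma b2_weight_mod : N = a * \sum_(i < N | jparts p f i.+1) i.+1 %[mod p].
Proof.
rewrite -{1}f_sum -modn_summ.
rewrite (eq_bigr (fun i : 'I_N => i.+1 * (mult_j p (f i) * a) %% p)).
  rewrite modn_summ; congr (_ %% _); rewrite big_distrr [RHS]big_mkcond.
  apply: eq_bigr => i _.
  by rewrite jparts_succ; case: (mult_j p (f i)) => /=; lia.
by move=> i _; rewrite -modnMmr (allowed_mult_mod p_ndvd_a (f_allowed i)) modnMmr.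
Qed.

Lemma jparts_pair_sum : pair_sum_le N (jparts p f).
Proof.
move=> _ _ /existsP[i /andP[/eqP<- fi]] /existsP[j /andP[/eqP<- fj]] lt_ij.
have ji : j != i by apply: contraTneq lt_ij => ->; rewrite ltnn.
have le_i : i.+1 <= i.+1 * f i by rewrite leq_pmulr // (mult_j_gt0 fi).
have le_j : j.+1 <= j.+1 * f j by rewrite leq_pmulr // (mult_j_gt0 fj).
by rewrite -[X in _ <= X]f_sum (bigD1 i) // (bigD1 j) //=; lia.
Qed.

Local Notation D := (franklin_delta N (jparts p f)).
Hypothesis f_moves : D != [::].

Let D_move : franklin_move N (jparts p f) D.
Proof. exact: franklin_delta_move (@jparts_bounded p N f) jparts_pair_sum f_moves. Qed.

Lemma franklin_mult_sum : \sum_(i < N) i.+1 * franklin_mult p b f i = N.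
Proof.
have [D_uniq D_bounded D_balanced _] := D_move.
have sumD (P : pred nat) :
    \sum_(i < N) (if (i.+1 \in D) && P i.+1 then i.+1 else 0) = \sum_(x <- D | P x) x.
  rewrite -big_mkcond big_mkcondr.
  by rewrite (sum_parts_mem (fun x => if P x then x else 0)) // -big_mkcond.
have : \sum_(i < N) i.+1 * franklin_mult p b f i + b * \sum_(x <- D | jparts p f x) x
     = \sum_(i < N) i.+1 * f i + b * \sum_(x <- D | ~~ jparts p f x) x.
  rewrite -!sumD !big_distrr -!big_split; apply: eq_bigr => i _.
  rewrite /franklin_mult jparts_succ; case: (i.+1 \in D) => /=; last by rewrite !muln0.
  by have := toggle_mult_balance p_ndvd_a (f_allowed i); case: (mult_j p (f i)) => /=; nia.
by rewrite D_balanced f_sum => /addIn.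
Qed.

Lemma franklin_partitionE i : franklin_partition p b f i = franklin_mult p b f i :> nat.
Proof.
rewrite ffunE inordK // ltnS; have := franklin_mult_sum; rewrite (bigD1 i) //= => sumE.
have : i.+1 * franklin_mult p b f i <= N by rewrite -[X in _ <= X]sumE leq_addr.
exact/leq_trans/leq_pmull.
Qed.

Lemma franklin_partition_b2 : b2_partition p r a m (franklin_partition p b f).
Proof.
apply/andP; split.
  rewrite -[X in _ == X]franklin_mult_sum; apply/eqP/eq_bigr => i _.
  by rewrite franklin_partitionE.
apply/forallP => i; rewrite franklin_partitionE /franklin_mult; case: ifP => // _.
by case: (allowed_mult_toggle p_ndvd_a (f_allowed i)).
Qed.

Lemma jparts_franklin : jparts p (franklin_partition p b f) =1 toggle_set (jparts p f) D.
Proof.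
have [_ D_bounded _ _] := D_move.
move=> x; rewrite /toggle_set; have [x_pos|x_out] := boolP (0 < x <= N); last first.
  have notJ (g : {ffun 'I_N -> 'I_N.+1}) : jparts p g x = false.
    by apply: contraNF x_out => /jparts_bounded.
  by rewrite !notJ; apply/esym/negbTE; apply: contra x_out => /D_bounded.
have x_lt : x.-1 < N by lia.
have -> : x = (Ordinal x_lt).+1 by rewrite /=; lia.
rewrite !jparts_succ franklin_partitionE /franklin_mult.
case: ifP => _; last by rewrite addbF.
by case: (allowed_mult_toggle p_ndvd_a (f_allowed (Ordinal x_lt))) => _ -> _ _; rewrite addbT.
Qed.

Lemma franklin_partitionK : franklin_partition p b (franklin_partition p b f) = f.
Proof.
have [_ _ _ D_toggle] := D_move.
have D_eq : franklin_delta N (jparts p (franklin_partition p b f)) =i D.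
  by move=> x; rewrite (eq_franklin_delta _ jparts_franklin) D_toggle.
apply/ffunP => i; rewrite ffunE {1}/franklin_mult D_eq franklin_partitionE /franklin_mult.
case: (i.+1 \in D); last by rewrite inord_val.
by case: (allowed_mult_toggle p_ndvd_a (f_allowed i)) => _ _ -> _; rewrite inord_val.
Qed.

Lemma franklin_partition_neq : franklin_partition p b f != f.
Proof.
have [_ D_bounded _ _] := D_move.
case D_eq: D f_moves => [//|x D'] _.
have /andP[x_gt0 x_le_N] : 0 < x <= N by apply: D_bounded; rewrite D_eq mem_head.
have x_lt : x.-1 < N by lia.
set i := Ordinal x_lt; have i_succ : i.+1 = x by rewrite /=; lia.
apply/negP => /eqP/(congr1 (fun g : {ffun 'I_N -> 'I_N.+1} => nat_of_ord (g i))).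
rewrite franklin_partitionE /franklin_mult D_eq i_succ mem_head.
by case: (allowed_mult_toggle p_ndvd_a (f_allowed i)) => _ _ _ /eqP.
Qed.

End FranklinPartition.

Lemma b2E p r a m N :
  b2 p r a m N = #|[set f : {ffun 'I_N -> 'I_N.+1} | b2_partition p r a m f]|.
Proof. by []. Qed.

Import GRing.Theory.
Local Open Scope ring_scope.

Lemma pentagonal_weight_square (p n N a S y : nat) (t ainv : int) :
  (a%:Z * ainv = 1 %[mod p%:Z])%Z -> N%:Z = (p * n)%:Z + t -> (N = a * S %[mod p])%N ->
  (24 * S + 1 = y ^ 2)%N -> (y%:Z ^+ 2 = 24 * t * ainv + 1 %[mod p%:Z])%Z.
Proof.
move=> /eqP; rewrite eqz_mod_dvd => /dvdzP[c ainvE] NE NaS yE.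
have /dvdzP[u NaS'] : (p%:Z %| N%:Z - (a * S)%:Z)%Z by rewrite -eqz_mod_dvd !modz_nat NaS.
have yE' : y%:Z ^+ 2 = 24 * S%:Z + 1 by rewrite expr2 -PoszM mulnn -yE PoszD PoszM.
rewrite PoszM in NE; rewrite PoszM in NaS'.
have tE : t = a%:Z * S%:Z + u * p%:Z - p%:Z * n%:Z by rewrite -NaS' NE; ring.
apply/eqP; rewrite eqz_mod_dvd; apply/dvdzP; exists (- 24 * (S%:Z * c + (u - n%:Z) * ainv)).
apply/eqP; rewrite -subr_eq0; apply/eqP; rewrite yE' tE.
transitivity (- 24 * S%:Z * (a%:Z * ainv - 1 - c * p%:Z)); first ring.
by rewrite ainvE subrr mulr0.
Qed.

Unset Implicit Arguments.

Theorem theorem4p2 (p a r m : nat) (t ainv : int) :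
  prime p -> (3 < p)%N -> (0 < a)%N -> coprime a p -> (1 <= m)%N ->
  (a%:Z * ainv = 1 %[mod p%:Z])%Z ->
  qnr p (24 * t * ainv + 1) ->
  forall n : nat, 0 <= (p * n)%:Z + t ->
    ~~ odd (b2 p r a m (absz ((p * n)%:Z + t))).
Proof.
move=> p_prime _ _ a_coprime _ ainvP tQNR n tn.
have p_ndvd_a : ~~ (p %| a)%N by rewrite -prime_coprime // coprime_sym.
have : (absz ((p * n)%:Z + t))%:Z = (p * n)%:Z + t by rewrite gez0_abs.
move: (absz _) => N NE.
have moves (f : {ffun 'I_N -> 'I_N.+1}) :
    b2_partition p r a m f -> franklin_delta N (jparts p f) != [::].
  move=> f_b2; apply/eqP => /(franklin_delta_nil (@jparts_bounded p N f))[y yE].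
  apply: tQNR; exists y%:Z.
  exact: pentagonal_weight_square ainvP NE (b2_weight_mod p_ndvd_a f_b2) yE.
rewrite b2E; apply: (@card_even_involution _ _ (@franklin_partition p (p * r + a)%N N)).
- by move=> f; rewrite !inE => f_b2; apply: (franklin_partition_b2 p_ndvd_a f_b2); apply: moves.
- by move=> f; rewrite inE => f_b2; apply: (franklin_partitionK p_ndvd_a f_b2); apply: moves.
- by move=> f; rewrite inE => f_b2; apply: (franklin_partition_neq p_ndvd_a f_b2); apply: moves.
Qed.
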